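(* Let $\gamma\in(0,2)$. Suppose $\boldsymbol{w}^k\in\mathbb{R}^{n+m}$, $\tilde{\boldsymbol{w}}^k=(\tilde{\boldsymbol{x}}^k,\tilde{\boldsymbol{\lambda}}^k)\in\Omega$, $r_k,s_k>0$ with $r_ks_k>\rho(\mathcal{D}\Phi(\tilde{\boldsymbol{x}}^k)\mathcal{D}\Phi(\tilde{\boldsymbol{x}}^k)^T)$, and that $$f(\boldsymbol{x})-f(\tilde{\boldsymbol{x}}^k)+(\boldsymbol{w}-\tilde{\boldsymbol{w}}^k)^T\{\boldsymbol{\Gamma}(\tilde{\boldsymbol{w}}^k)+\boldsymbol{\Sigma}_k(\tilde{\boldsymbol{w}}^k-\boldsymbol{w}^k)\}\ge 0\quad\forall\,\boldsymbol{w}=(\boldsymbol{x},\boldsymbol{\lambda})\in\Omega,$$ and let $\boldsymbol{w}^{k+1}=\boldsymbol{w}^k-\gamma(\boldsymbol{w}^k-\tilde{\boldsymbol{w}}^k)$. Then for every $\boldsymbol{w}^*\in\Omega^*$, $$\|\boldsymbol{w}^{k+1}-\boldsymbol{w}^*\|_{\boldsymbol{\Sigma}_k}^2\le\|\boldsymbol{w}^k-\boldsymbol{w}^*\|_{\boldsymbol{\Sigma}_k}^2-\gamma(2-\gamma)\|\tilde{\boldsymbol{w}}^k-\boldsymbol{w}^k\|_{\boldsymbol{\Sigma}_k}^2.$$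
   Context: Standing setting: $\mathcal{X}\subset\mathbb{R}^n$ nonempty closed convex; $f:\mathbb{R}^n\to\mathbb{R}$ convex (not necessarily differentiable); $\phi_1,\dots,\phi_m:\mathbb{R}^n\to\mathbb{R}$ convex and continuously differentiable; $\Phi(\boldsymbol{x})=(\phi_1(\boldsymbol{x}),\dots,\phi_m(\boldsymbol{x}))^T$ with $m\times n$ Jacobian $\mathcal{D}\Phi(\boldsymbol{x})$ (rows $\nabla\phi_i(\boldsymbol{x})^T$). The problem is $\min\{f(\boldsymbol{x})\mid \phi_i(\boldsymbol{x})\le0,\ i=1,\dots,m,\ \boldsymbol{x}\in\mathcal{X}\}$. $\mathcal{Z}=\mathbb{R}^m_+$, $\Omega=\mathcal{X}\times\mathcal{Z}$, $\boldsymbol{w}=(\boldsymbol{x},\boldsymbol{\lambda})$, $\boldsymbol{\Gamma}(\boldsymbol{w})=(\mathcal{D}\Phi(\boldsymbol{x})^T\boldsymbol{\lambda},\,-\Phi(\boldsymbol{x}))$. $\Omega^*$ is the (assumed nonempty) set of $\boldsymbol{w}^*=(\boldsymbol{x}^*,\boldsymbol{\lambda}^* )\in\Omega$ with $f(\boldsymbol{x})-f(\boldsymbol{x}^* )+(\boldsymbol{w}-\boldsymbol{w}^* )^T\boldsymbol{\Gamma}(\boldsymbol{w}^* )\ge0$ for all $\boldsymbol{w}\in\Omega$ (equivalently, saddle points of the Lagrangian $f(\boldsymbol{x})+\boldsymbol{\lambda}^T\Phi(\boldsymbol{x})$ over $\mathcal{X}\times\mathbb{R}^m_+$). The relaxed-PPA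 proximal matrix is the symmetric matrix $\boldsymbol{\Sigma}_k=\begin{pmatrix} r_k\boldsymbol{I}_n & -\mathcal{D}\Phi(\tilde{\boldsymbol{x}}^k)^T\\ -\mathcal{D}\Phi(\tilde{\boldsymbol{x}}^k) & s_k\boldsymbol{I}_m\end{pmatrix}$, and $\|\boldsymbol{v}\|_{\boldsymbol{H}}^2=\boldsymbol{v}^T\boldsymbol{H}\boldsymbol{v}$; $\rho(\cdot)$ is the spectral radius. The variational inequality in the hypothesis is what the customized PPA step produces: $\tilde{\boldsymbol{x}}^k\in\arg\min_{\boldsymbol{x}\in\mathcal{X}}\{f(\boldsymbol{x})+(\boldsymbol{\lambda}^k)^T\Phi(\boldsymbol{x})+\frac{r_k}{2}\|\boldsymbol{x}-\boldsymbol{x}^k\|^2\}$ and $\tilde{\boldsymbol{\lambda}}^k=P_{\mathbb{R}^m_+}\big(\boldsymbol{\lambda}^k+\frac1{s_k}[\Phi(\tilde{\boldsymbol{x}}^k)+\mathcal{D}\Phi(\tilde{\boldsymbol{x}}^k)(\tilde{\boldsymbol{x}}^k-\boldsymbol{x}^k)]\big)$ with $\boldsymbol{\lambda}^k\ge0$. *)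

From HB Require Import structures.
From mathcomp Require Import all_boot all_order all_algebra.
From mathcomp Require Import all_classical all_reals all_analysis.
From mathcomp Require Import complex.
Set Implicit Arguments. Unset Strict Implicit. Unset Printing Implicit Defensive.
Import Order.TTheory GRing.Theory Num.Theory.
Import numFieldNormedType.Exports.
Local Open Scope ring_scope.
Local Open Scope classical_set_scope.

Definition convex_fun (R : realType) (n : nat) (g : 'cV[R]_n -> R) : Prop :=
  forall x y (t : R), 0 <= t <= 1 ->
    g (t *: x + (1 - t) *: y) <= t * g x + (1 - t) * g y.

Definition nonneg_vec (R : realType) (m : nat) (l : 'cV[R]_m) : Prop :=
  forall i, 0 <= l i 0.

Definition PhiV (R : realType) (n m : nat) (phi : 'I_m -> 'cV[R]_n -> R)
  (x : 'cV[R]_n) : 'cV[R]_m := \col_i phi i x.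

Definition Gam (R : realType) (n m : nat) (phi : 'I_m -> 'cV[R]_n -> R)
  (DPhi : 'cV[R]_n -> 'M[R]_(m, n)) (x : 'cV[R]_n) (l : 'cV[R]_m)
  : 'cV[R]_(n + m) :=
  col_mx (trmx (DPhi x) *m l) (- PhiV phi x).

Definition Omega_star (R : realType) (n m : nat) (X : set 'cV[R]_n)
  (f : 'cV[R]_n -> R) (phi : 'I_m -> 'cV[R]_n -> R)
  (DPhi : 'cV[R]_n -> 'M[R]_(m, n)) (xs : 'cV[R]_n) (ls : 'cV[R]_m) : Prop :=
  X xs /\ nonneg_vec ls /\
  forall x l, X x -> nonneg_vec l ->
    0 <= f x - f xs +
         ((trmx (col_mx x l - col_mx xs ls) *m Gam phi DPhi xs ls) 0 0).

Definition SigmaMx (R : realType) (n m : nat) (r s : R) (J : 'M[R]_(m, n))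
  : 'M[R]_(n + m) :=
  block_mx (r%:M) (- trmx J) (- J) (s%:M).

Definition sqnormH (R : realType) (N : nat) (H : 'M[R]_N) (v : 'cV[R]_N) : R :=
  (trmx v *m H *m v) 0 0.

(* Spectral radius: sup of the moduli of the (complex) eigenvalues;
   sup of the empty set (m = 0) is 0 by the MathComp-Analysis convention. *)
Definition spectral_radius (R : realType) (m : nat) (A : 'M[R]_m) : R :=
  sup [set Normc.normc z | z in
         [set z : R[i] | eigenvalue (map_mx (fun a : R => a%:C%C) A) z]].

From HB Require Import structures.
From mathcomp Require Import all_boot all_order all_algebra.
From mathcomp Require Import all_classical all_reals all_analysis.
From mathcomp Require Import complex.
From mathcomp Require Import ring lra.
Import Order.TTheory GRing.Theory Num.Theory.
Import numFieldNormedType.Exports.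
Local Open Scope ring_scope.
Local Open Scope classical_set_scope.

(* Write p = w~ - w_s, d = w~ - w^k.  Then w^{k+1} - w_s = p + (gamma - 1) d and
   w^k - w_s = p - d, so for any symmetric Sigma, expanding the quadratic forms,
     RHS - LHS = - 2 gamma <p, Sigma d>.
   Hence everything reduces to the cross term <p, Sigma d> being nonpositive.
   Adding the proximal variational inequality (tested at w = w_s) and the one
   defining w_s (tested at w = w~) gives <p, Sigma d> <= - <p, Gamma(w~) - Gamma(w_s)>,
   and Gamma is monotone on R^n x R^m_+ because each phi_i is convex and
   differentiable (gradient inequality) and the multipliers are nonnegative. *)

Lemma convex_gradient_ineq {R : realType} {n : nat} {g : 'cV[R]_n -> R} x y :
  convex_fun g -> differentiable g x -> 'd g x (y - x) <= g y - g x.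
Proof.
move=> cvx_g dg; set v := y - x.
rewrite -deriveE //.
have dv : derivable g x v by exact: diff_derivable.
set q := (fun h : R => h^-1 *: ((g \o shift x) (h *: v) - g x)).
have cvg_q : q @ 0^' --> 'D_v g x by exact: dv.
have cvg_q_right : q @ 0^'+ --> 'D_v g x.
  move=> A /cvg_q /nbhs_ballP [e e0 eA]; exists e => //= z ze z0.
  by apply: eA => //; rewrite gt_eqF.
apply: (cvgr_to_le cvg_q_right).
near=> h.
have h0 : 0 < h by near: h; exact: nbhs_right_gt.
have h1 : h <= 1 by near: h; apply: nbhs_right_ltW; exact: ltr01.
(* the difference quotient along the chord is bounded by the secant slope *)
have -> : q h = (g (h *: v + x) - g x) / h by rewrite /q /= mulrC.
rewrite ler_pdivrMr //.
have -> : h *: v + x = h *: y + (1 - h) *: x.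
  by rewrite /v scalerBr scalerBl scale1r -addrA (addrC (- _)).
have := cvx_g y x h; rewrite h1 (ltW h0) /= => /(_ isT); lra.
Unshelve. all: by end_near. Qed.

Section InnerProduct.
Variable R : realType.

Definition dotc (N : nat) (a b : 'cV[R]_N) : R := (trmx a *m b) 0 0.
Arguments dotc {N}.

Lemma dotcE N (a b : 'cV[R]_N) : dotc a b = \sum_i a i 0 * b i 0.
Proof. by rewrite /dotc mxE; apply: eq_bigr => i _; rewrite mxE. Qed.

Lemma dotcC N (a b : 'cV[R]_N) : dotc a b = dotc b a.
Proof. by rewrite !dotcE; apply: eq_bigr => i _; rewrite mulrC. Qed.

Lemma dotcDr N (a b c : 'cV[R]_N) : dotc a (b + c) = dotc a b + dotc a c.
Proof. by rewrite /dotc mulmxDr mxE. Qed.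

Lemma dotcNr N (a b : 'cV[R]_N) : dotc a (- b) = - dotc a b.
Proof. by rewrite /dotc mulmxN mxE. Qed.

Lemma dotcZr N (a b : 'cV[R]_N) k : dotc a (k *: b) = k * dotc a b.
Proof. by rewrite /dotc -scalemxAr mxE. Qed.

Lemma dotcBr N (a b c : 'cV[R]_N) : dotc a (b - c) = dotc a b - dotc a c.
Proof. by rewrite dotcDr dotcNr. Qed.

Lemma dotcDl N (a b c : 'cV[R]_N) : dotc (b + c) a = dotc b a + dotc c a.
Proof. by rewrite dotcC dotcDr ![dotc a _]dotcC. Qed.

Lemma dotcNl N (a b : 'cV[R]_N) : dotc (- b) a = - dotc b a.
Proof. by rewrite dotcC dotcNr dotcC. Qed.

Lemma dotcZl N (a b : 'cV[R]_N) k : dotc (k *: b) a = k * dotc b a.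
Proof. by rewrite dotcC dotcZr dotcC. Qed.

Lemma dotcBl N (a b c : 'cV[R]_N) : dotc (b - c) a = dotc b a - dotc c a.
Proof. by rewrite dotcDl dotcNl. Qed.

Lemma dotc_mulmx M N (A : 'M[R]_(M, N)) a b :
  dotc a (A *m b) = dotc (trmx A *m a) b.
Proof. by rewrite /dotc trmx_mul trmxK mulmxA. Qed.

Lemma dotc_col M N (a c : 'cV[R]_M) (b d : 'cV[R]_N) :
  dotc (col_mx a b) (col_mx c d) = dotc a c + dotc b d.
Proof. by rewrite /dotc tr_col_mx mul_row_col mxE. Qed.

Lemma dotc_ge0 N (a b : 'cV[R]_N) :
  (forall i, 0 <= a i 0) -> (forall i, 0 <= b i 0) -> 0 <= dotc a b.
Proof. by move=> ha hb; rewrite dotcE; apply: sumr_ge0 => i _; apply: mulr_ge0. Qed.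

Lemma sqnormH_dotc N (S : 'M[R]_N) v : sqnormH S v = dotc v (S *m v).
Proof. by rewrite /sqnormH /dotc mulmxA. Qed.

Lemma sqnormH_line N (S : 'M[R]_N) (p d : 'cV[R]_N) c : trmx S = S ->
  sqnormH S (p + c *: d) =
  sqnormH S p + 2 * c * dotc p (S *m d) + c ^+ 2 * sqnormH S d.
Proof.
move=> symS; rewrite !sqnormH_dotc.
have cross : dotc d (S *m p) = dotc p (S *m d) by rewrite dotc_mulmx symS dotcC.
by rewrite mulmxDr -scalemxAr !(dotcDl, dotcDr, dotcZl, dotcZr) cross; ring.
Qed.

Lemma relaxed_step_contraction {N} {S : 'M[R]_N} {wk wt ws : 'cV[R]_N} {gamma} :
  trmx S = S -> 0 <= gamma -> dotc (wt - ws) (S *m (wt - wk)) <= 0 ->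
  sqnormH S (wk - gamma *: (wk - wt) - ws) <=
    sqnormH S (wk - ws) - gamma * (2 - gamma) * sqnormH S (wt - wk).
Proof.
move=> symS g0 cross_le0; set p := wt - ws; set d := wt - wk.
have -> : wk - gamma *: (wk - wt) - ws = p + (gamma - 1) *: d.
  by apply/matrixP => i j; rewrite /p /d !mxE; ring.
have -> : wk - ws = p + (-1) *: d.
  by apply/matrixP => i j; rewrite /p /d !mxE; ring.
rewrite !sqnormH_line //; nra.
Qed.

End InnerProduct.
Arguments dotc {R N}.

Lemma SigmaMx_sym {R : realType} {n m : nat} (r s : R) (J : 'M[R]_(m, n)) :
  trmx (SigmaMx r s J) = SigmaMx r s J.
Proof. by rewrite /SigmaMx tr_block_mx !tr_scalar_mx !linearN /= trmxK. Qed.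

Section Monotonicity.
Variables (R : realType) (n m : nat).
Variables (phi : 'I_m -> 'cV[R]_n -> R) (DPhi : 'cV[R]_n -> 'M[R]_(m, n)).
Hypothesis phi_convex : forall i, convex_fun (phi i).
Hypothesis phi_diff : forall i x, differentiable (phi i) x /\
  forall v, 'd (phi i) x v = \sum_(j < n) DPhi x i j * v j 0.

Lemma Phi_linearization i x y :
  (DPhi x *m (y - x)) i 0 <= phi i y - phi i x.
Proof.
have [dx dE] := phi_diff i x.
by have := convex_gradient_ineq x y (phi_convex i) dx; rewrite dE mxE.
Qed.

(* Gamma is monotone on R^n x R^m_+:
   <w1 - w2, Gamma(w1) - Gamma(w2)>
     = <l1, Phi(x2) - Phi(x1) + DPhi(x1)(x1 - x2)>
     + <l2, Phi(x1) - Phi(x2) - DPhi(x2)(x1 - x2)>  >= 0. *)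
Lemma Gam_monotone x1 l1 x2 l2 : nonneg_vec l1 -> nonneg_vec l2 ->
  0 <= dotc (col_mx x1 l1 - col_mx x2 l2)
            (Gam phi DPhi x1 l1 - Gam phi DPhi x2 l2).
Proof.
move=> l1_ge0 l2_ge0.
have lin1 : 0 <= dotc l1 (PhiV phi x2 - PhiV phi x1 + DPhi x1 *m (x1 - x2)).
  apply: dotc_ge0 => // i.
  have := Phi_linearization i x1 x2; rewrite -[x2 - x1]opprB mulmxN !mxE; lra.
have lin2 : 0 <= dotc l2 (PhiV phi x1 - PhiV phi x2 - DPhi x2 *m (x1 - x2)).
  apply: dotc_ge0 => // i.
  have := Phi_linearization i x2 x1; rewrite !mxE; lra.
rewrite opp_col_mx add_col_mx /Gam opp_col_mx add_col_mx dotc_col.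
rewrite dotcBr ![dotc (x1 - x2) _]dotcC -!dotc_mulmx.
rewrite !(dotcDr, dotcBr, dotcNr, dotcBl) in lin1 lin2 *.
lra.
Qed.

Lemma proximal_cross_term_nonpos (X : set 'cV[R]_n) (f : 'cV[R]_n -> R)
    (S : 'M[R]_(n + m)) xk lk xt lt xs ls :
  X xt -> nonneg_vec lt ->
  (forall x l, X x -> nonneg_vec l ->
     0 <= f x - f xt +
       ((trmx (col_mx x l - col_mx xt lt) *m
          (Gam phi DPhi xt lt + S *m (col_mx xt lt - col_mx xk lk))) 0 0)) ->
  Omega_star X f phi DPhi xs ls ->
  dotc (col_mx xt lt - col_mx xs ls) (S *m (col_mx xt lt - col_mx xk lk)) <= 0.
Proof.
move=> Xt lt_ge0 prox_vi [Xs [ls_ge0 sol_vi]].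
have vi_t := prox_vi xs ls Xs ls_ge0; have vi_s := sol_vi xt lt Xt lt_ge0.
have mono := Gam_monotone xt lt xs ls lt_ge0 ls_ge0.
rewrite -/(dotc _ _) -[col_mx xs ls - _]opprB dotcNl dotcDr in vi_t.
rewrite -/(dotc _ _) in vi_s; rewrite dotcBr in mono.
lra.
Qed.

End Monotonicity.
Arguments proximal_cross_term_nonpos {R n m phi DPhi} _ _ {X f S xk lk xt lt xs ls}.

Theorem theorem1 (R : realType) (n m : nat)
  (X : set 'cV[R]_n) (f : 'cV[R]_n -> R)
  (phi : 'I_m -> 'cV[R]_n -> R) (DPhi : 'cV[R]_n -> 'M[R]_(m, n))
  (gamma r s : R) (xk xt : 'cV[R]_n) (lk lt : 'cV[R]_m) :
  (* standing setting *)
  X !=set0 -> closed X -> convex_set X ->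
  convex_fun f ->
  (forall i, convex_fun (phi i)) ->
  (forall i x, differentiable (phi i) x /\
     forall v, 'd (phi i) x v = \sum_(j < n) DPhi x i j * v j 0) ->
  continuous DPhi ->
  (* hypotheses of the theorem *)
  0 < gamma < 2 ->
  X xt -> nonneg_vec lt ->
  0 < r -> 0 < s ->
  spectral_radius (DPhi xt *m trmx (DPhi xt)) < r * s ->
  (forall x l, X x -> nonneg_vec l ->
     0 <= f x - f xt +
       ((trmx (col_mx x l - col_mx xt lt) *m
          (Gam phi DPhi xt lt +
           SigmaMx r s (DPhi xt) *m (col_mx xt lt - col_mx xk lk))) 0 0)) ->
  forall xs ls, Omega_star X f phi DPhi xs ls ->
  let wk := col_mx xk lk in
  let wt := col_mx xt lt in
  let ws := col_mx xs ls in
  let wk1 := wk - gamma *: (wk - wt) in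
  let Sig := SigmaMx r s (DPhi xt) in
  sqnormH Sig (wk1 - ws) <=
    sqnormH Sig (wk - ws) - gamma * (2 - gamma) * sqnormH Sig (wt - wk).
Proof.
move=> _ _ _ _ phi_convex phi_diff _ /andP[gamma_gt0 _] Xt lt_ge0 _ _ _
  prox_vi xs ls sol; cbv zeta.
have cross_le0 :=
  proximal_cross_term_nonpos phi_convex phi_diff Xt lt_ge0 prox_vi sol.
exact: relaxed_step_contraction (SigmaMx_sym _ _ _) (ltW gamma_gt0) cross_le0.
Qed.
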